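(* Let $p\ge1$ and $n>p$ be integers. Let $z$ be a real even eigenfunction of order $n$ with eigenvalue $\Lambda>0$, and write $$z=R+P,\qquad R(x)=\sum_{j=0}^{2p-1} r_j e^{i\lambda_j x},$$ where: - $\lambda_0,\dots,\lambda_{2p-1}$ are the distinct roots of $\lambda^{2p}=\Lambda$, and - $P$ is a polynomial. Then $R$ is even, so $R(x)=\rho(x^2)$ for a real-analytic function $\rho$. Moreover $$\rho^{(k)}(1)=0\qquad\text{for all }k\in\{n-p,\,n-p+1,\dots,n-1\}.$$
   Context: Fix an integer $p\ge1$. For an integer $k\ge p$ and real $\Lambda$, the differential operator on $[-1,1]$ is $$L^{2k}(\Lambda)=(-1)^k\frac{d^{2k}}{dx^{2k}}-\Lambda(-1)^{k-p}\frac{d^{2k-2p}}{dx^{2k-2p}}.$$ An eigenfunction of order $n$ with eigenvalue $\Lambda$ is a nonzero real $z\in C^{2n}[-1,1]$ such that: - $L^{2n}(\Lambda)z=0$ on $[-1,1]$, and - $z^{(j)}(\pm1)=0$ for $j=0,\dots,n-1$. Such $z$ is a linear combination of the exponentials $e^{i\lambda_j x}$ and a polynomial of degree at most $2n-2p-1$. *)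

From Stdlib Require Import Reals Lra Lia.
Open Scope R_scope.

Definition Cplx := (R * R)%type.
Definition Cadd (u v : Cplx) : Cplx := (fst u + fst v, snd u + snd v).
Definition Cmul (u v : Cplx) : Cplx :=
  (fst u * fst v - snd u * snd v, fst u * snd v + snd u * fst v).
Definition Cone : Cplx := (1, 0).
Definition Czero : Cplx := (0, 0).
Fixpoint Cpow (u : Cplx) (k : nat) : Cplx :=
  match k with O => Cone | S k' => Cmul u (Cpow u k') end.
Fixpoint Csum (f : nat -> Cplx) (m : nat) : Cplx :=
  match m with O => Czero | S m' => Cadd (Csum f m') (f m') end.
(** e^{i lam x} for lam = a + i b and real x:  = e^{-b x} (cos (a x) + i sin (a x)). *)
Definition Cexpi (lam : Cplx) (x : R) : Cplx :=
  (exp (- snd lam * x) * cos (fst lam * x), exp (- snd lam * x) * sin (fst lam * x)).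
Definition RtoC (t : R) : Cplx := (t, 0).

Definition Icl (x : R) : Prop := -1 <= x <= 1.

(** This encodes z in C^m[-1,1] with z^(k) = D k. *)
Definition Cm_derivs (z : R -> R) (m : nat) (D : nat -> R -> R) : Prop :=
  (forall x, Icl x -> D O x = z x) /\
  (forall k x, (k < m)%nat -> Icl x -> D_in (D k) (D (S k)) Icl x) /\
  (forall x, Icl x -> limit1_in (D m) Icl (D m x) x).

Definition eigenfunction (p nn : nat) (Lam : R) (z : R -> R) : Prop :=
  exists D : nat -> R -> R,
    Cm_derivs z (2 * nn) D /\
    (forall x, Icl x ->
       (-1) ^ nn * D (2 * nn)%nat x
       - Lam * (-1) ^ (nn - p) * D (2 * nn - 2 * p)%nat x = 0) /\
    (forall j, (j < nn)%nat -> D j 1 = 0 /\ D j (-1) = 0) /\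
    (exists x, Icl x /\ z x <> 0).

Definition real_analytic (f : R -> R) : Prop :=
  forall t0, exists r a, 0 < r /\
    forall t, Rabs (t - t0) < r -> Pser a (t - t0) (f t).

Definition all_derivs (f : R -> R) (D : nat -> R -> R) : Prop :=
  (forall x, D O x = f x) /\
  (forall k x, derivable_pt_lim (D k) x (D (S k) x)).

(* Let Z = R + P be the extension of z to the whole line and alpha = (-1)^p Lam.
   Since lam_j^(2p) = Lam, the derivatives s_k = R^(k)(0) satisfy
   s_(k+2p) = alpha s_k, while z^(k)(0) = s_k + k! c_k with c_k = 0 for large k.
   So every linear relation among the z^(k)(0) that holds for all large k
   propagates back to all k: Im z = 0 gives Im s_k = 0, evenness gives
   Re s_(2i+1) = 0 = Re c_(2i+1), and L^(2n)(Lam) z = 0, i.e.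
   z^(m+2p)(0) = alpha z^(m)(0) for m >= 2n-2p, gives Re c_m = 0 for
   m >= 2n-2p.  Being entire with geometrically growing derivatives, R is the
   sum of its Taylor series: it is real and even, R(x) = rho(x^2) with
   rho = sum_m s_(2m) t^m / (2m)!.  Finally z(x) = (rho + pi)(x^2) with pi a
   polynomial of degree < n - p, and the boundary conditions make z, hence
   (rho + pi)(t) = Re Z(sqrt t), flat to order n at 1. *)

From Coquelicot Require Import Coquelicot.
From Stdlib Require Import Reals Lra Lia Factorial.
Open Scope R_scope.
Set Bullet Behavior "Strict Subproofs".

(** * Complex arithmetic and finite sums *)

Lemma Cext (u v : Cplx) : fst u = fst v -> snd u = snd v -> u = v.
Proof. destruct u, v; simpl; intros; subst; reflexivity. Qed.

Ltac Cring := apply Cext; unfold Cadd, Cmul, Cone, Czero, RtoC; simpl; ring.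

Lemma Cmul_assoc u v w : Cmul u (Cmul v w) = Cmul (Cmul u v) w.
Proof. Cring. Qed.
Lemma Cmul_comm u v : Cmul u v = Cmul v u.
Proof. Cring. Qed.

Lemma fst_Cmul_RtoC a u : fst (Cmul (RtoC a) u) = a * fst u.
Proof. unfold Cmul, RtoC; simpl; ring. Qed.
Lemma snd_Cmul_RtoC a u : snd (Cmul (RtoC a) u) = a * snd u.
Proof. unfold Cmul, RtoC; simpl; ring. Qed.

Lemma fst_Cmul_RtoC_r u a : fst (Cmul u (RtoC a)) = fst u * a.
Proof. unfold Cmul, RtoC; simpl; ring. Qed.

Lemma Cpow_add u a b : Cpow u (a + b) = Cmul (Cpow u a) (Cpow u b).
Proof. induction a as [|a IH]; simpl; [Cring | rewrite IH; apply Cmul_assoc]. Qed.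

Lemma Cpow_mul_distr u v k : Cpow (Cmul u v) k = Cmul (Cpow u k) (Cpow v k).
Proof. induction k as [|k IH]; simpl; [|rewrite IH]; Cring. Qed.

Lemma Cpow_mul u a b : Cpow u (a * b) = Cpow (Cpow u a) b.
Proof.
  induction b as [|b IH]; [rewrite Nat.mul_0_r; reflexivity|].
  rewrite Nat.mul_succ_r, Cpow_add, IH. apply Cmul_comm.
Qed.

Lemma Cpow_RtoC x k : Cpow (RtoC x) k = RtoC (x ^ k).
Proof. induction k as [|k IH]; simpl; [|rewrite IH]; Cring. Qed.

Lemma Csum_ext f g m : (forall j, (j < m)%nat -> f j = g j) -> Csum f m = Csum g m.
Proof.
  induction m as [|m IH]; simpl; intros H; [reflexivity|].
  rewrite IH, H; [reflexivity | lia | intros; apply H; lia].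
Qed.

Lemma Cmul_Csum u f m : Cmul u (Csum f m) = Csum (fun j => Cmul u (f j)) m.
Proof. induction m as [|m IH]; simpl; [|rewrite <- IH]; Cring. Qed.

Lemma Csum_single f m k : (forall j, j <> k -> f j = Czero) ->
  Csum f m = if (k <? m)%nat then f k else Czero.
Proof.
  intros H. induction m as [|m IH]; simpl; [reflexivity|]. rewrite IH.
  destruct (Nat.eq_dec m k) as [->|Hmk].
  - rewrite Nat.ltb_irrefl, (proj2 (Nat.ltb_lt k (S k))) by lia. Cring.
  - rewrite (H m Hmk). destruct (Nat.ltb_spec k m), (Nat.ltb_spec k (S m)); try lia; Cring.
Qed.

(** [rsum f m = f 0 + ... + f (m - 1)] has [m] terms, like [Csum] and unlike [sum_f_R0]. *)
Fixpoint rsum (f : nat -> R) (m : nat) : R :=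
  match m with O => 0 | S m' => rsum f m' + f m' end.

Lemma rsum_ext f g m : (forall j, (j < m)%nat -> f j = g j) -> rsum f m = rsum g m.
Proof.
  induction m as [|m IH]; simpl; intros H; [reflexivity|].
  rewrite IH, H; [reflexivity | lia | intros; apply H; lia].
Qed.

Lemma rsum_le f g m : (forall j, (j < m)%nat -> f j <= g j) -> rsum f m <= rsum g m.
Proof.
  induction m as [|m IH]; simpl; intros H; [lra|].
  pose proof (IH (fun j Hj => H j ltac:(lia))). pose proof (H m ltac:(lia)). lra.
Qed.

Lemma rsum_nonneg f m : (forall j, 0 <= f j) -> 0 <= rsum f m.
Proof. intros H; induction m; simpl; [lra|]. specialize (H m). lra. Qed.

Lemma le_rsum f m j : (forall j, 0 <= f j) -> (j < m)%nat -> f j <= rsum f m.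
Proof.
  intros H Hj. induction m as [|m IH]; simpl; [lia|].
  destruct (Nat.eq_dec j m) as [->|].
  - pose proof (rsum_nonneg f m H). lra.
  - pose proof (IH ltac:(lia)). specialize (H m). lra.
Qed.

Lemma rsum_scal a f m : rsum (fun j => a * f j) m = a * rsum f m.
Proof. induction m as [|m IH]; simpl; [|rewrite IH]; ring. Qed.

Lemma rsum_extend g M d : (forall m, (M <= m)%nat -> g m = 0) -> rsum g (M + d) = rsum g M.
Proof.
  intros H. induction d as [|d IH]; [rewrite Nat.add_0_r; reflexivity|].
  rewrite Nat.add_succ_r. cbn [rsum]. rewrite IH, (H (M + d)%nat) by lia. ring.
Qed.

Lemma rsum_even_odd g M : rsum g (2 * M) = rsum (fun i => g (2 * i)%nat + g (2 * i + 1)%nat) M.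
Proof.
  induction M as [|M IH]; [reflexivity|]. replace (2 * S M)%nat with (S (S (2 * M))) by lia.
  cbn [rsum]. rewrite IH. replace (S (2 * M)) with (2 * M + 1)%nat by lia. ring.
Qed.

Lemma fst_Csum f m : fst (Csum f m) = rsum (fun j => fst (f j)) m.
Proof. induction m as [|m IH]; simpl; [|rewrite IH]; reflexivity. Qed.

Definition Cnorm1 (u : Cplx) := Rabs (fst u) + Rabs (snd u).

Lemma Cnorm1_ge0 u : 0 <= Cnorm1 u.
Proof. unfold Cnorm1; pose proof (Rabs_pos (fst u)); pose proof (Rabs_pos (snd u)); lra. Qed.
Lemma Rabs_fst_le_Cnorm1 u : Rabs (fst u) <= Cnorm1 u.
Proof. unfold Cnorm1; pose proof (Rabs_pos (snd u)); lra. Qed.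
Lemma Rabs_snd_le_Cnorm1 u : Rabs (snd u) <= Cnorm1 u.
Proof. unfold Cnorm1; pose proof (Rabs_pos (fst u)); lra. Qed.

Lemma Cnorm1_Cadd u v : Cnorm1 (Cadd u v) <= Cnorm1 u + Cnorm1 v.
Proof.
  unfold Cnorm1, Cadd; simpl. pose proof (Rabs_triang (fst u) (fst v)).
  pose proof (Rabs_triang (snd u) (snd v)). lra.
Qed.

Lemma Cnorm1_Cmul u v : Cnorm1 (Cmul u v) <= Cnorm1 u * Cnorm1 v.
Proof.
  destruct u as [a b], v as [c d]; unfold Cnorm1, Cmul; simpl.
  pose proof (Rabs_triang (a * c) (- (b * d))). pose proof (Rabs_triang (a * d) (b * c)).
  unfold Rminus. rewrite Rabs_Ropp in *. rewrite !Rabs_mult in *. nra.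
Qed.

Lemma Cnorm1_Cpow u k : Cnorm1 (Cpow u k) <= Cnorm1 u ^ k.
Proof.
  induction k as [|k IH]; simpl.
  - unfold Cnorm1, Cone; simpl. rewrite Rabs_R1, Rabs_R0; lra.
  - eapply Rle_trans; [apply Cnorm1_Cmul|]. apply Rmult_le_compat_l; [apply Cnorm1_ge0|exact IH].
Qed.

Lemma Cnorm1_Csum f m : Cnorm1 (Csum f m) <= rsum (fun j => Cnorm1 (f j)) m.
Proof.
  induction m as [|m IH]; simpl.
  - unfold Cnorm1, Czero; simpl. rewrite Rabs_R0; lra.
  - eapply Rle_trans; [apply Cnorm1_Cadd|]. lra.
Qed.

Lemma exp_le_mono a b : a <= b -> exp a <= exp b.
Proof. intros [H|H]; [left; apply exp_increasing, H | rewrite H; right; reflexivity]. Qed.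

Lemma Cnorm1_Cexpi l x : Cnorm1 (Cexpi l x) <= 2 * exp (Rabs (snd l) * Rabs x).
Proof.
  unfold Cnorm1, Cexpi; simpl. rewrite !Rabs_mult, (Rabs_right (exp _)) by (left; apply exp_pos).
  assert (exp (- snd l * x) <= exp (Rabs (snd l) * Rabs x)).
  { rewrite <- Rabs_mult. apply exp_le_mono. rewrite <- Rabs_Ropp, Ropp_mult_distr_l. apply Rle_abs. }
  pose proof (exp_pos (- snd l * x)).
  pose proof (Rabs_pos (cos (fst l * x))); pose proof (Rabs_pos (sin (fst l * x))).
  pose proof (COS_bound (fst l * x)); pose proof (SIN_bound (fst l * x)).
  assert (Rabs (cos (fst l * x)) <= 1) by (apply Rabs_le; lra).
  assert (Rabs (sin (fst l * x)) <= 1) by (apply Rabs_le; lra).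
  nra.
Qed.

(** * Chains of derivatives *)

Definition chain (F : nat -> R -> R) := forall k x, derivable_pt_lim (F k) x (F (S k) x).

Lemma chain_shift F a : chain F -> chain (fun k => F (a + k)%nat).
Proof. intros H k x. rewrite Nat.add_succ_r. apply H. Qed.

Lemma chain_lin F G a b : chain F -> chain G -> chain (fun k x => a * F k x + b * G k x).
Proof. intros HF HG k x. apply derivable_pt_lim_plus; apply derivable_pt_lim_scal; auto. Qed.

Lemma chain_rsum (w : nat -> R) (F : nat -> nat -> R -> R) m :
  (forall i, chain (F i)) -> chain (fun k x => rsum (fun i => w i * F i k x) m).
Proof.
  intros H k x. induction m as [|m IH]; simpl; [apply derivable_pt_lim_const|].
  apply derivable_pt_lim_plus; [exact IH | apply derivable_pt_lim_scal, H].
Qed.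

Lemma chain_reflect F : chain F -> chain (fun k x => (-1) ^ k * F k (- x)).
Proof.
  intros H k x. simpl.
  replace (-1 * (-1) ^ k * F (S k) (- x)) with ((-1) ^ k * (F (S k) (- x) * - (1))) by ring.
  apply derivable_pt_lim_scal, (derivable_pt_lim_comp Ropp (F k)); [|apply H].
  apply derivable_pt_lim_opp, derivable_pt_lim_id.
Qed.

Lemma chain_Derive_n f : (forall k x, ex_derive_n f k x) -> chain (fun k => Derive_n f k).
Proof. intros H k x. apply is_derive_Reals, Derive_correct, (H (S k) x). Qed.

Lemma Derive_n_chain G : chain G -> forall k t, Derive_n (G 0%nat) k t = G k t.
Proof.
  intros H k. induction k as [|k IH]; intros t; [reflexivity|].
  simpl. rewrite (Derive_ext _ (G k) t IH). apply is_derive_unique, is_derive_Reals, H.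
Qed.

Lemma ex_derive_n_chain G : chain G -> forall k t, ex_derive_n (G 0%nat) k t.
Proof.
  intros H [|k] t; [exact I|]. simpl.
  apply (ex_derive_ext (G k)); [intros; symmetry; apply Derive_n_chain, H|].
  exists (G (S k) t). apply is_derive_Reals, H.
Qed.

Lemma derivable_pt_lim_local_ext f g x l d : 0 < d ->
  (forall y, Rabs (y - x) < d -> f y = g y) ->
  derivable_pt_lim f x l -> derivable_pt_lim g x l.
Proof.
  intros Hd E H eps He. destruct (H eps He) as [d1 Hd1].
  assert (Hm : 0 < Rmin d1 d) by (apply Rmin_pos; [apply cond_pos|lra]).
  exists (mkposreal _ Hm). intros h Hh Hhd. simpl in Hhd.
  pose proof (Rmin_l d1 d); pose proof (Rmin_r d1 d).
  rewrite <- !E; [apply Hd1; auto; lra | |].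
  - rewrite Rminus_diag, Rabs_R0; lra.
  - replace (x + h - x) with h by ring. lra.
Qed.

Lemma derivable_pt_lim_unique_on a b f g t l1 l2 : a < t < b ->
  (forall y, a < y < b -> f y = g y) ->
  derivable_pt_lim f t l1 -> derivable_pt_lim g t l2 -> l1 = l2.
Proof.
  intros Ht E Hf Hg. apply (uniqueness_limite f t); [exact Hf|].
  apply (derivable_pt_lim_local_ext g _ t _ (Rmin (t - a) (b - t))); [apply Rmin_pos; lra| |exact Hg].
  intros y Hy. symmetry; apply E.
  pose proof (Rmin_l (t - a) (b - t)); pose proof (Rmin_r (t - a) (b - t)).
  apply Rabs_def2 in Hy. lra.
Qed.

Definition chain_on (a b : R) (F : nat -> R -> R) :=
  forall k x, a < x < b -> derivable_pt_lim (F k) x (F (S k) x).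

Lemma chain_vanish_on a b F : chain F -> (forall x, a < x < b -> F 0%nat x = 0) ->
  forall k x, a < x < b -> F k x = 0.
Proof.
  intros HF H0 k. induction k as [|k IH]; intros x Hx; [auto|].
  apply (derivable_pt_lim_unique_on a b (F k) (fun _ => 0) x); auto.
  apply derivable_pt_lim_const.
Qed.

Definition cchain (F : nat -> R -> Cplx) :=
  chain (fun k x => fst (F k x)) /\ chain (fun k x => snd (F k x)).

Lemma cchain_Csum (F : nat -> nat -> R -> Cplx) m :
  (forall j, cchain (F j)) -> cchain (fun k x => Csum (fun j => F j k x) m).
Proof.
  intros H. induction m as [|m [IH1 IH2]]; simpl.
  - split; intros k x; apply derivable_pt_lim_const.
  - split; intros k x; simpl; apply derivable_pt_lim_plus; auto; apply H.
Qed.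

Lemma cchain_Cadd F G : cchain F -> cchain G -> cchain (fun k x => Cadd (F k x) (G k x)).
Proof. intros [A B] [C D]. split; intros k x; simpl; apply derivable_pt_lim_plus; auto. Qed.

Lemma cchain_Cmul_l u F : cchain F -> cchain (fun k x => Cmul u (F k x)).
Proof.
  intros [A B]. split; intros k x; simpl;
    [apply derivable_pt_lim_minus | apply derivable_pt_lim_plus];
    apply derivable_pt_lim_scal; auto.
Qed.

Lemma cchain_RtoC F : chain F -> cchain (fun k x => RtoC (F k x)).
Proof. intros A. split; intros k x; simpl; [apply A | apply derivable_pt_lim_const]. Qed.

Definition dmono (m k : nat) : R -> R := Derive_n (fun y => y ^ m) k.

Lemma chain_dmono m : chain (dmono m).
Proof. apply chain_Derive_n. intros; apply ex_derive_n_pow. Qed.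

Lemma dmono_0_r m x : dmono m 0 x = x ^ m.
Proof. reflexivity. Qed.

Lemma dmono_at_0 m k : dmono m k 0 = if Nat.eqb k m then INR (fact m) else 0.
Proof.
  unfold dmono. rewrite Derive_n_pow.
  destruct (Nat.eq_dec k m) as [->|Hkm].
  - rewrite Nat.eqb_refl. destruct (Compare_dec.le_dec m m); [|lia].
    rewrite Nat.sub_diag. simpl. field.
  - rewrite (proj2 (Nat.eqb_neq k m) Hkm). destruct (Compare_dec.le_dec k m); [|reflexivity].
    replace (m - k)%nat with (S (m - k - 1)) by lia. simpl. ring.
Qed.

Lemma dmono_high m k x : (m < k)%nat -> dmono m k x = 0.
Proof.
  intros H. unfold dmono. rewrite Derive_n_pow.
  destruct (Compare_dec.le_dec k m); [lia | reflexivity].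
Qed.

(** [mu l = i l], so that [dexp l k] is the [k]-th derivative of [Cexpi l]. *)
Definition mu (l : Cplx) : Cplx := (- snd l, fst l).
Definition dexp (l : Cplx) (k : nat) (x : R) : Cplx := Cmul (Cpow (mu l) k) (Cexpi l x).

Lemma cchain_dexp l : cchain (dexp l).
Proof.
  destruct l as [a b]. unfold dexp.
  split; intros k x; cbn [Cpow]; set (u := Cpow (mu (a, b)) k);
    unfold Cexpi, Cmul, mu; cbn [fst snd];
    apply is_derive_Reals; auto_derive; auto; ring.
Qed.

Lemma adhDa_Icl x : Icl x -> adhDa (D_x Icl x) x.
Proof.
  unfold Icl; intros Hx alp Halp.
  set (m := Rmin alp 1 / 2).
  assert (0 < m /\ m < alp /\ m <= 1 / 2)
    by (pose proof (Rmin_l alp 1); pose proof (Rmin_r alp 1);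
        pose proof (Rmin_pos alp 1 Halp Rlt_0_1); unfold m; lra).
  exists (if Rle_dec x 0 then x + m else x - m).
  unfold D_x, Icl, R_dist; destruct (Rle_dec x 0).
  - replace (x + m - x) with m by ring. rewrite Rabs_right by lra. repeat split; lra.
  - replace (x - m - x) with (- m) by ring. rewrite Rabs_Ropp, Rabs_right by lra.
    repeat split; lra.
Qed.

Lemma D_in_Icl_unique f g d l x : Icl x -> (forall y, Icl y -> f y = g y) ->
  D_in f d Icl x -> derivable_pt_lim g x l -> d x = l.
Proof.
  intros Hx E Hf Hg.
  apply (derivable_pt_lim_D_in g (fun _ => l)) in Hg.
  assert (Hg' : limit1_in (fun y => (g y - g x) / (y - x)) (D_x Icl x) l x).
  { apply (limit1_imp _ (D_x no_cond x)); [|exact Hg].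
    intros y [_ Hy]; split; [exact I|exact Hy]. }
  apply (single_limit (fun y => (f y - f x) / (y - x)) (D_x Icl x) (d x) l x);
    [apply adhDa_Icl, Hx | exact Hf |].
  intros eps He. destruct (Hg' eps He) as [alp [Halp H]]. exists alp. split; [exact Halp|].
  intros y [[Hy Hyx] Hd]. rewrite !E by assumption. apply H; split; [split|]; assumption.
Qed.

Lemma Cm_derivs_cchain (z : R -> R) m D Z : Cm_derivs z m D -> cchain Z ->
  (forall x, Icl x -> RtoC (z x) = Z 0%nat x) ->
  forall k x, (k <= m)%nat -> Icl x -> RtoC (D k x) = Z k x.
Proof.
  intros [H0 [H1 _]] [Z1 Z2] Hz k. induction k as [|k IH]; intros x Hk Hx.
  - rewrite H0 by exact Hx. apply Hz, Hx.
  - assert (IHfst : forall y, Icl y -> D k y = fst (Z k y))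
      by (intros y Hy; rewrite <- IH by (lia || exact Hy); reflexivity).
    assert (IHsnd : forall y, Icl y -> 0 = snd (Z k y))
      by (intros y Hy; rewrite <- IH by (lia || exact Hy); reflexivity).
    apply Cext; simpl.
    + apply (D_in_Icl_unique (D k) (fun y => fst (Z k y)) (D (S k)) _ x Hx IHfst);
        [apply H1; lia || exact Hx | apply Z1].
    + apply (D_in_Icl_unique (fun _ => 0) (fun y => snd (Z k y)) (fun _ => 0) _ x Hx IHsnd);
        [apply Dconst | apply Z2].
Qed.

(** * Taylor series *)

Lemma infinite_sum_ext a b l : (forall k, a k = b k) -> infinite_sum a l -> infinite_sum b l.
Proof.
  intros E H eps He. destruct (H eps He) as [N HN]. exists N. intros m Hm.
  rewrite <- (sum_eq a b m) by auto. apply HN, Hm.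
Qed.

Lemma infinite_sum_abs_le f L C : infinite_sum f L ->
  (forall m, Rabs (sum_f_R0 f m) <= C) -> Rabs L <= C.
Proof.
  intros H B. apply Rnot_lt_le. intros Hlt.
  destruct (H (Rabs L - C) ltac:(lra)) as [N HN]. specialize (HN N (le_n _)). specialize (B N).
  unfold R_dist in HN. rewrite Rabs_minus_sym in HN.
  pose proof (Rabs_triang_inv L (sum_f_R0 f N)). lra.
Qed.

Lemma Pser_zero_coef a x l : (forall k, a k = 0) -> Pser a x l -> l = 0.
Proof.
  intros Ha H. apply (uniqueness_sum (fun k => a k * x ^ k)); [exact H|].
  intros eps He. exists 0%nat. intros m _. unfold R_dist.
  replace (sum_f_R0 _ m) with 0; [rewrite Rminus_diag, Rabs_R0; exact He|].
  induction m as [|m IH]; simpl; rewrite Ha; [ring | rewrite <- IH; ring].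
Qed.

Lemma pow_div_fact_le_exp x m : 0 <= x -> x ^ m / INR (fact m) <= exp x.
Proof.
  intros Hx. eapply Rle_trans; [|apply (exp_ge_taylor x m Hx)].
  destruct m as [|m]; [simpl; lra|]. rewrite tech5.
  assert (0 <= sum_f_R0 (fun k => x ^ k / INR (fact k)) m); [|lra].
  apply cond_pos_sum. intros k. apply Rmult_le_pos; [apply pow_le, Hx|].
  apply Rlt_le, Rinv_0_lt_compat, INR_fact_lt_0.
Qed.

Lemma chain_taylor_pos G x0 h M K : chain G -> 0 < h -> 0 <= K ->
  (forall k t, x0 <= t <= x0 + h -> Rabs (G k t) <= M * K ^ k) ->
  Pser (fun k => G k x0 / INR (fact k)) h (G 0%nat (x0 + h)).
Proof.
  intros HG Hh HK Hb eps Heps.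
  assert (HM : 0 < Rabs M + 1) by (pose proof (Rabs_pos M); lra).
  destruct (cv_speed_pow_fact (K * h) (eps / (Rabs M + 1))) as [N HN];
    [apply Rdiv_lt_0_compat; lra|].
  exists N. intros m Hm. specialize (HN (S m) ltac:(lia)).
  destruct (Taylor_Lagrange (G 0%nat) m x0 (x0 + h)) as [zeta [Hz E]];
    [lra | intros; apply ex_derive_n_chain, HG|].
  replace (x0 + h - x0) with h in E by ring.
  rewrite (sum_eq _ (fun k => G k x0 / INR (fact k) * h ^ k)), Derive_n_chain in E
    by (try intros i _; rewrite ?Derive_n_chain by exact HG; unfold Rdiv; ring || exact HG).
  rewrite E. unfold R_dist in *.
  match goal with |- Rabs (?S - (?S + ?T)) < _ => replace (S - (S + T)) with (- T) by ring end.
  rewrite Rabs_Ropp. set (q := (K * h) ^ S m / INR (fact (S m))) in *.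
  assert (Hf : 0 < / INR (fact (S m))) by apply Rinv_0_lt_compat, INR_fact_lt_0.
  assert (Hq : 0 <= q) by (apply Rmult_le_pos; [apply pow_le, Rmult_le_pos; lra | lra]).
  rewrite Rminus_0_r, Rabs_right in HN by lra.
  assert (Hrem : Rabs (h ^ S m / INR (fact (S m)) * G (S m) zeta) <= Rabs M * q).
  { rewrite Rabs_mult, Rabs_right by (apply Rle_ge, Rmult_le_pos; [apply pow_le|]; lra).
    unfold q. rewrite Rpow_mult_distr. unfold Rdiv.
    apply Rle_trans with (h ^ S m * / INR (fact (S m)) * (Rabs M * K ^ S m)); [|right; ring].
    apply Rmult_le_compat_l; [apply Rmult_le_pos; [apply pow_le|]; lra|].
    apply Rle_trans with (M * K ^ S m); [apply Hb; lra|].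
    apply Rmult_le_compat_r; [apply pow_le, HK | apply Rle_abs]. }
  apply (Rmult_lt_compat_l (Rabs M + 1)) in HN; [|lra].
  replace ((Rabs M + 1) * (eps / (Rabs M + 1))) with eps in HN by (field; lra).
  nra.
Qed.

Lemma chain_taylor G x0 h M K : chain G -> 0 <= K ->
  (forall k t, Rabs (t - x0) <= Rabs h -> Rabs (G k t) <= M * K ^ k) ->
  Pser (fun k => G k x0 / INR (fact k)) h (G 0%nat (x0 + h)).
Proof.
  intros HG HK Hb. destruct (Rtotal_order h 0) as [Hn|[->|Hp]].
  - pose proof (chain_taylor_pos _ (- x0) (- h) M K (chain_reflect G HG)) as T.
    simpl in T. replace (- (- x0 + - h)) with (x0 + h) in T by ring. rewrite Rmult_1_l in T.
    eapply infinite_sum_ext; [|apply T; try lra].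
    + intros k. rewrite Ropp_involutive.
      replace (- h) with (-1 * h) by ring. rewrite Rpow_mult_distr.
      unfold Rdiv. rewrite <- (Rmult_1_l (G k x0 * _ * _)), <- (pow1 k).
      replace 1 with ((-1) * (-1)) by ring. rewrite Rpow_mult_distr. ring.
    + intros k t Ht. rewrite Rabs_mult, pow_1_abs, Rmult_1_l. apply Hb.
      rewrite (Rabs_left h), Rabs_left1 by lra. lra.
  - rewrite Rplus_0_r. intros eps He. exists 0%nat. intros m _.
    replace (sum_f_R0 _ m) with (G 0%nat x0).
    + unfold R_dist. rewrite Rminus_diag, Rabs_R0. exact He.
    + induction m as [|m IH]; simpl; [field|rewrite <- IH; ring].
  - apply (chain_taylor_pos G x0 h M K); auto. intros k t Ht. apply Hb.
    rewrite !Rabs_right by lra. lra.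
Qed.

Section PowerSeriesWithFactorialDecay.
Variables (a : nat -> R) (M Q : R).
Hypothesis HQ : 0 <= Q.
Hypothesis Ha : forall m, Rabs (a m) <= M * Q ^ m / INR (fact m).

Lemma PSeries_decay_M_ge0 : 0 <= M.
Proof. pose proof (Ha 0%nat) as H. simpl in H. pose proof (Rabs_pos (a 0%nat)). lra. Qed.

Lemma PSeries_decay_radius y : Rbar_lt (Rabs y) (CV_radius a).
Proof.
  set (r := Rabs y + 1). assert (Hr : 0 <= r) by (unfold r; pose proof (Rabs_pos y); lra).
  assert (HE : exists B, forall m, Rabs (a m * r ^ m) <= B).
  { exists (M * exp (Q * r)). intros m.
    rewrite Rabs_mult, (Rabs_right (r ^ m)) by (apply Rle_ge, pow_le, Hr).
    eapply Rle_trans; [apply Rmult_le_compat_r; [apply pow_le, Hr | apply Ha]|].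
    replace (M * Q ^ m / INR (fact m) * r ^ m) with (M * ((Q * r) ^ m / INR (fact m)))
      by (rewrite Rpow_mult_distr; unfold Rdiv; ring).
    apply Rmult_le_compat_l; [apply PSeries_decay_M_ge0|].
    apply pow_div_fact_le_exp, Rmult_le_pos; assumption. }
  destruct (CV_radius_bounded a) as [Hub _]. specialize (Hub r HE).
  destruct (CV_radius a); simpl in *; unfold r in *; auto; lra.
Qed.

Lemma Derive_n_PSeries_decay_bound k u T : Rabs u <= T ->
  Rabs (Derive_n (PSeries a) k u) <= M * exp (Q * T) * Q ^ k.
Proof.
  intros HT. rewrite Derive_n_PSeries by apply PSeries_decay_radius.
  assert (Hex : ex_pseries (PS_derive_n k a) u).
  { apply CV_radius_inside. rewrite CV_radius_derive_n. apply PSeries_decay_radius. }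
  pose proof (proj1 (is_pseries_Reals _ _ _) (PSeries_correct _ _ Hex)) as Hs.
  assert (HT0 : 0 <= T) by (pose proof (Rabs_pos u); lra).
  pose proof PSeries_decay_M_ge0 as HM.
  replace (M * exp (Q * T) * Q ^ k) with (M * Q ^ k * exp (Q * T)) by ring.
  apply (infinite_sum_abs_le _ _ _ Hs). intros m0.
  eapply Rle_trans; [apply sum_f_R0_triangle|].
  apply Rle_trans with (M * Q ^ k * sum_f_R0 (fun m => (Q * T) ^ m / INR (fact m)) m0).
  - rewrite scal_sum. apply sum_Rle. intros m _. unfold PS_derive_n.
    rewrite !Rabs_mult, Rabs_div, <- RPow_abs by apply INR_fact_neq_0.
    rewrite (Rabs_right (INR (fact (m + k)))), (Rabs_right (INR (fact m))) by (apply Rle_ge, pos_INR).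
    pose proof (INR_fact_lt_0 m); pose proof (INR_fact_lt_0 (m + k)).
    assert (Hu : Rabs u ^ m <= T ^ m) by (apply pow_incr; split; [apply Rabs_pos|exact HT]).
    apply Rle_trans
      with (INR (fact (m + k)) / INR (fact m) * (M * Q ^ (m + k) / INR (fact (m + k))) * T ^ m).
    + apply Rmult_le_compat; try apply pow_le, Rabs_pos; auto.
      * apply Rmult_le_pos; [apply Rdiv_le_0_compat; lra | apply Rabs_pos].
      * apply Rmult_le_compat_l; [apply Rdiv_le_0_compat; lra | apply Ha].
    + right. rewrite pow_add, Rpow_mult_distr. field. lra.
  - apply Rmult_le_compat_l; [apply Rmult_le_pos; [exact HM | apply pow_le, HQ]|].
    apply exp_ge_taylor, Rmult_le_pos; assumption.
Qed.

Lemma chain_Derive_n_PSeries_decay : chain (fun k => Derive_n (PSeries a) k).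
Proof. apply chain_Derive_n. intros k x. apply ex_derive_n_PSeries, PSeries_decay_radius. Qed.

Lemma PSeries_decay_analytic : real_analytic (PSeries a).
Proof.
  intros t0. exists 1, (fun k => Derive_n (PSeries a) k t0 / INR (fact k)).
  split; [lra|]. intros t Ht.
  pose proof (chain_taylor _ t0 (t - t0) (M * exp (Q * (Rabs t0 + 1))) Q
                chain_Derive_n_PSeries_decay HQ) as H.
  replace (t0 + (t - t0)) with t in H by ring. apply H.
  intros k u Hu. apply Derive_n_PSeries_decay_bound.
  replace u with (t0 + (u - t0)) by ring.
  pose proof (Rabs_triang t0 (u - t0)). lra.
Qed.

End PowerSeriesWithFactorialDecay.

(** * Flatness *)

Section Flatness.
Variables a b : R.

Fixpoint smooth_on (m : nat) (f : R -> R) : Prop :=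
  match m with
  | O => True
  | S m' => exists f', (forall t, a < t < b -> derivable_pt_lim f t (f' t)) /\ smooth_on m' f'
  end.

Fixpoint flat_at (t0 : R) (m : nat) (f : R -> R) : Prop :=
  match m with
  | O => True
  | S m' => f t0 = 0 /\
      exists f', (forall t, a < t < b -> derivable_pt_lim f t (f' t)) /\ flat_at t0 m' f'
  end.

Lemma smooth_on_pred m f : smooth_on (S m) f -> smooth_on m f.
Proof.
  revert f; induction m as [|m IH]; intros f [f' [Hf Hs]]; [exact I|].
  exists f'. split; [exact Hf | apply IH, Hs].
Qed.

Lemma flat_at_pred t0 m f : flat_at t0 (S m) f -> flat_at t0 m f.
Proof.
  revert f; induction m as [|m IH]; intros f [H0 [f' [Hf Hs]]]; [exact I|].
  split; [exact H0|]. exists f'. split; [exact Hf | apply IH, Hs].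
Qed.

Lemma flat_at_plus t0 m f g : flat_at t0 m f -> flat_at t0 m g ->
  flat_at t0 m (fun t => f t + g t).
Proof.
  revert f g; induction m as [|m IH]; intros f g; [intros; exact I|].
  intros [Hf0 [f' [Hf Hf']]] [Hg0 [g' [Hg Hg']]]. split; [rewrite Hf0, Hg0; ring|].
  exists (fun t => f' t + g' t). split; [|apply IH; assumption].
  intros t Ht. apply derivable_pt_lim_plus; auto.
Qed.

Lemma flat_at_mult t0 m f g : flat_at t0 m f -> smooth_on m g ->
  flat_at t0 m (fun t => f t * g t).
Proof.
  revert f g; induction m as [|m IH]; intros f g; [intros; exact I|].
  intros [Hf0 [f' [Hf Hf']]] [g' [Hg Hg']]. split; [rewrite Hf0; ring|].
  exists (fun t => f' t * g t + f t * g' t). split.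
  - intros t Ht. apply (derivable_pt_lim_mult f g); auto.
  - apply flat_at_plus; apply IH; auto.
    + apply smooth_on_pred. exists g'. auto.
    + apply flat_at_pred. split; [exact Hf0|]. exists f'. auto.
Qed.

Lemma flat_at_comp W h t0 m : chain W -> (forall j, (j < m)%nat -> W j (h t0) = 0) ->
  smooth_on m h -> flat_at t0 m (fun t => W 0%nat (h t)).
Proof.
  revert W h; induction m as [|m IH]; intros W h HW H0 Hh; [exact I|].
  destruct Hh as [h' [Hh' Hs]]. split; [apply H0; lia|].
  exists (fun t => W 1%nat (h t) * h' t). split.
  - intros t Ht. apply (derivable_pt_lim_comp h (W 0%nat)); [apply Hh', Ht | apply HW].
  - apply flat_at_mult; [|exact Hs].
    apply (IH (fun k => W (S k))); [intros k x; apply HW | intros j Hj; apply H0; lia |].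
    apply smooth_on_pred. exists h'. auto.
Qed.

Lemma smooth_on_chain_on G m k : chain_on a b G -> smooth_on m (G k).
Proof.
  intros HG. revert k; induction m as [|m IH]; intros k; [exact I|].
  exists (G (S k)). split; [apply HG | apply IH].
Qed.

Lemma flat_at_chain_on Y f t0 m : chain_on a b Y -> a < t0 < b ->
  (forall t, a < t < b -> Y 0%nat t = f t) -> flat_at t0 m f ->
  forall j, (j < m)%nat -> Y j t0 = 0.
Proof.
  intros HY Ht0. revert Y f HY; induction m as [|m IH]; intros Y f HY E Hf j Hj; [lia|].
  destruct Hf as [Hf0 [f' [Hf' Hflat]]]. destruct j as [|j].
  - rewrite E by exact Ht0. exact Hf0.
  - apply (IH (fun k => Y (S k)) f'); [intros k x Hx; apply HY, Hx| |exact Hflat|lia].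
    intros t Ht. apply (derivable_pt_lim_unique_on a b (Y 0%nat) f t); auto; apply HY, Ht.
Qed.

End Flatness.

(** [dsqrt k t = (1/2) (1/2 - 1) ... (1/2 - k + 1) t^(1/2 - k)] is the [k]-th
    derivative of [sqrt]. *)
Fixpoint sqrt_coef (k : nat) : R :=
  match k with O => 1 | S k' => sqrt_coef k' * (/ 2 - INR k') end.
Definition dsqrt (k : nat) (t : R) : R := sqrt_coef k * sqrt t * (/ t) ^ k.

Lemma chain_on_dsqrt b : chain_on 0 b dsqrt.
Proof.
  intros k t Ht. unfold dsqrt. simpl sqrt_coef.
  assert (St : 0 < sqrt t) by (apply sqrt_lt_R0; lra).
  assert (E2 : sqrt t * sqrt t = t) by (apply sqrt_sqrt; lra).
  apply is_derive_Reals. auto_derive; [repeat split; lra|].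
  replace (/ (2 * sqrt t)) with (sqrt t / (2 * t)) by (rewrite <- E2 at 2; field; lra).
  destruct k as [|k]; [simpl; field; lra|].
  simpl Init.Nat.pred. rewrite S_INR. simpl pow. field. lra.
Qed.

(** * Even eigenfunctions *)

Lemma scaled_recurrence_zero (u : nat -> R) (q K N0 : nat) (alpha : R) :
  (1 <= q)%nat -> alpha <> 0 ->
  (forall k, (K <= k)%nat -> u (k + q)%nat = alpha * u k) ->
  (forall k, (N0 <= k)%nat -> u k = 0) ->
  forall k, (K <= k)%nat -> u k = 0.
Proof.
  intros Hq Ha Hrec Hzero k Hk.
  assert (Hiter : forall t, u (k + q * t)%nat = alpha ^ t * u k).
  { induction t as [|t IH]; [rewrite Nat.mul_0_r, Nat.add_0_r; simpl; ring|].
    replace (k + q * S t)%nat with (k + q * t + q)%nat by lia.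
    rewrite Hrec, IH by lia. simpl; ring. }
  pose proof (Hiter N0) as E. rewrite Hzero in E by nia.
  destruct (Rmult_integral _ _ (eq_sym E)) as [H|H]; [|exact H].
  exfalso. exact (pow_nonzero alpha N0 Ha H).
Qed.

Section EvenEigenfunction.
Variables (p n : nat) (Lam : R) (z : R -> R) (lam r : nat -> Cplx) (N : nat) (c : nat -> Cplx)
  (D : nat -> R -> R).
Hypothesis Hp : (1 <= p)%nat.
Hypothesis Hn : (p < n)%nat.
Hypothesis HLam : 0 < Lam.
Hypothesis HD : Cm_derivs z (2 * n) D.
Hypothesis Hode : forall x, Icl x ->
  (-1) ^ n * D (2 * n)%nat x - Lam * (-1) ^ (n - p) * D (2 * n - 2 * p)%nat x = 0.
Hypothesis Hbc : forall j, (j < n)%nat -> D j 1 = 0.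
Hypothesis Heven : forall x, Icl x -> z (- x) = z x.
Hypothesis Hroots : forall j, (j < 2 * p)%nat -> Cpow (lam j) (2 * p) = RtoC Lam.
Hypothesis Hz : forall x, Icl x ->
  RtoC (z x) = Cadd (Csum (fun j => Cmul (r j) (Cexpi (lam j) x)) (2 * p))
                    (Csum (fun k => Cmul (c k) (RtoC (x ^ k))) N).

(** [dR k], [dP k] and [dZ k] are the [k]-th derivatives of [R], [P] and of
    [Z = R + P], which extends [z] to the whole line; [moment k = dR k 0] and
    [coef] pads the coefficients of [P] with zeros. *)
Definition dR k x := Csum (fun j => Cmul (r j) (dexp (lam j) k x)) (2 * p).
Definition dP k x := Csum (fun m => Cmul (c m) (RtoC (dmono m k x))) N.
Definition dZ k x := Cadd (dR k x) (dP k x).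

Definition moment k := Csum (fun j => Cmul (r j) (Cpow (mu (lam j)) k)) (2 * p).
Definition coef k := if (k <? N)%nat then c k else Czero.
Definition alpha := (-1) ^ p * Lam.

Lemma alpha_neq0 : alpha <> 0.
Proof. unfold alpha. apply Rmult_integral_contrapositive_currified; [apply pow_nonzero|]; lra. Qed.

Lemma cchain_dR : cchain dR.
Proof. apply cchain_Csum. intros j; apply cchain_Cmul_l, cchain_dexp. Qed.

Lemma cchain_dZ : cchain dZ.
Proof.
  apply cchain_Cadd; [apply cchain_dR|].
  apply cchain_Csum; intros m; apply cchain_Cmul_l, cchain_RtoC, chain_dmono.
Qed.

Lemma dR_0 x : dR 0 x = Csum (fun j => Cmul (r j) (Cexpi (lam j) x)) (2 * p).
Proof. apply Csum_ext; intros j _. unfold dexp. simpl Cpow. f_equal. Cring. Qed.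

Lemma z_dZ x : Icl x -> RtoC (z x) = dZ 0 x.
Proof. intros Hx. rewrite Hz by exact Hx. unfold dZ. rewrite dR_0. reflexivity. Qed.

Lemma D_dZ k x : (k <= 2 * n)%nat -> Icl x -> RtoC (D k x) = dZ k x.
Proof. apply (Cm_derivs_cchain z _ D dZ HD cchain_dZ z_dZ). Qed.

Lemma coef_high k : (N <= k)%nat -> coef k = Czero.
Proof. intros H. unfold coef. destruct (Nat.ltb_spec k N); [lia|reflexivity]. Qed.

Lemma dR_at_0 k : dR k 0 = moment k.
Proof.
  apply Csum_ext; intros j _. unfold dexp, Cexpi. rewrite !Rmult_0_r, exp_0, cos_0, sin_0.
  f_equal. Cring.
Qed.

Lemma dP_at_0 k : dP k 0 = Cmul (coef k) (RtoC (INR (fact k))).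
Proof.
  unfold dP. rewrite (Csum_single _ N k).
  - rewrite dmono_at_0, Nat.eqb_refl. unfold coef. destruct (k <? N)%nat; [reflexivity|Cring].
  - intros j Hj. rewrite dmono_at_0, (proj2 (Nat.eqb_neq k j)) by auto. Cring.
Qed.

Lemma dZ_at_0 k : dZ k 0 = Cadd (moment k) (Cmul (coef k) (RtoC (INR (fact k)))).
Proof. unfold dZ. rewrite dR_at_0, dP_at_0. reflexivity. Qed.

Lemma fst_dZ_at_0 k : fst (dZ k 0) = fst (moment k) + fst (coef k) * INR (fact k).
Proof. rewrite dZ_at_0. simpl. ring. Qed.

Lemma snd_dZ_at_0 k : snd (dZ k 0) = snd (moment k) + snd (coef k) * INR (fact k).
Proof. rewrite dZ_at_0. simpl. ring. Qed.

Lemma moment_shift k : moment (k + 2 * p) = Cmul (RtoC alpha) (moment k).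
Proof.
  unfold moment. rewrite Cmul_Csum. apply Csum_ext; intros j Hj.
  assert (Hmu : Cpow (mu (lam j)) (2 * p) = RtoC alpha).
  { replace (mu (lam j)) with (Cmul (0, 1) (lam j)) by Cring.
    rewrite Cpow_mul_distr, Hroots, Cpow_mul by exact Hj.
    replace (Cpow (0, 1) 2) with (RtoC (-1)) by Cring.
    rewrite Cpow_RtoC. unfold alpha. Cring. }
  rewrite Cpow_add, Hmu. Cring.
Qed.

Lemma snd_dZ_vanish k : snd (dZ k 0) = 0.
Proof.
  apply (chain_vanish_on (-1) 1 (fun k x => snd (dZ k x)) (proj2 cchain_dZ)); [|lra].
  intros x Hx. rewrite <- z_dZ by (unfold Icl; lra). reflexivity.
Qed.

Lemma fst_dZ_odd_vanish i : fst (dZ (2 * i + 1) 0) = 0.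
Proof.
  pose proof (chain_lin _ _ 1 (-1) (proj1 cchain_dZ) (chain_reflect _ (proj1 cchain_dZ))) as HG.
  pose proof (chain_vanish_on (-1) 1 _ HG) as H0. cbv beta in H0.
  specialize (H0 ltac:(intros x Hx; rewrite <- !z_dZ by (unfold Icl; lra);
                       simpl; rewrite Heven by (unfold Icl; lra); ring)
                (2 * i + 1)%nat 0 ltac:(lra)).
  replace (2 * i + 1)%nat with (S (2 * i)) in H0 |- * by lia.
  rewrite Ropp_0, pow_1_odd in H0. lra.
Qed.

Lemma fst_dZ_shift_at_0 m : (2 * n - 2 * p <= m)%nat ->
  fst (dZ (m + 2 * p) 0) = alpha * fst (dZ m 0).
Proof.
  intros Hm.
  assert (Hsign : (-1) ^ n * alpha = Lam * (-1) ^ (n - p)).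
  { unfold alpha. replace n with ((n - p) + p)%nat at 1 by lia. rewrite pow_add.
    replace ((-1) ^ (n - p) * (-1) ^ p * ((-1) ^ p * Lam))
      with (((-1) ^ p * (-1) ^ p) * (Lam * (-1) ^ (n - p))) by ring.
    rewrite <- Rpow_mult_distr. replace (-1 * -1) with 1 by ring. rewrite pow1. ring. }
  set (d := (m - (2 * n - 2 * p))%nat).
  pose proof (chain_lin _ _ ((-1) ^ n) (- (Lam * (-1) ^ (n - p)))
     (chain_shift _ (2 * n) (proj1 cchain_dZ))
     (chain_shift _ (2 * n - 2 * p) (proj1 cchain_dZ))) as HG.
  assert (H0 : forall k x, -1 < x < 1 ->
    (-1) ^ n * fst (dZ (2 * n + k)%nat x)
    + - (Lam * (-1) ^ (n - p)) * fst (dZ (2 * n - 2 * p + k)%nat x) = 0).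
  { apply (chain_vanish_on (-1) 1 _ HG). intros x Hx. rewrite !Nat.add_0_r.
    rewrite <- (D_dZ (2 * n)), <- (D_dZ (2 * n - 2 * p)) by (unfold Icl; lia || lra).
    unfold RtoC; cbn [fst]. pose proof (Hode x ltac:(unfold Icl; lra)). lra. }
  specialize (H0 d 0 ltac:(lra)).
  replace (2 * n + d)%nat with (m + 2 * p)%nat in H0 by (unfold d; lia).
  replace (2 * n - 2 * p + d)%nat with m in H0 by (unfold d; lia).
  rewrite <- Hsign in H0.
  apply (Rmult_eq_reg_l ((-1) ^ n)); [|apply pow_nonzero; lra]. lra.
Qed.

Lemma snd_moment k : snd (moment k) = 0.
Proof.
  apply (scaled_recurrence_zero (fun k => snd (moment k)) (2 * p) 0 N alpha);
    [lia | apply alpha_neq0 | | | lia].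
  - intros j _. rewrite moment_shift. apply snd_Cmul_RtoC.
  - intros j Hj. pose proof (snd_dZ_vanish j) as H. rewrite snd_dZ_at_0, coef_high in H by exact Hj.
    change (snd Czero) with 0 in H. lra.
Qed.

Lemma fst_moment_odd i : fst (moment (2 * i + 1)) = 0.
Proof.
  apply (scaled_recurrence_zero (fun i => fst (moment (2 * i + 1))) p 0 N alpha);
    [lia | apply alpha_neq0 | | | lia].
  - intros j _. replace (2 * (j + p) + 1)%nat with (2 * j + 1 + 2 * p)%nat by lia.
    rewrite moment_shift. apply fst_Cmul_RtoC.
  - intros j Hj. pose proof (fst_dZ_odd_vanish j) as H.
    rewrite fst_dZ_at_0, coef_high in H by lia. change (fst Czero) with 0 in H. lra.
Qed.

Lemma fst_coef_odd i : fst (coef (2 * i + 1)) = 0.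
Proof.
  pose proof (fst_dZ_odd_vanish i) as H. rewrite fst_dZ_at_0, fst_moment_odd in H.
  pose proof (INR_fact_neq_0 (2 * i + 1)). nra.
Qed.

(** The recurrence [z^(m+2p)(0) = alpha z^(m)(0)], valid for [m >= 2n-2p], bounds
    the degree of [P]. *)
Lemma fst_coef_high m : (2 * n - 2 * p <= m)%nat -> fst (coef m) = 0.
Proof.
  intros Hm.
  assert (H : fst (coef m) * INR (fact m) = 0).
  { apply (scaled_recurrence_zero (fun m => fst (coef m) * INR (fact m))
             (2 * p) (2 * n - 2 * p) N alpha);
      [lia | apply alpha_neq0 | | | exact Hm].
    - intros k Hk. pose proof (fst_dZ_shift_at_0 k Hk) as E.
      rewrite !fst_dZ_at_0, moment_shift, fst_Cmul_RtoC in E. lra.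
    - intros k Hk. rewrite coef_high by exact Hk. apply Rmult_0_l. }
  pose proof (INR_fact_neq_0 m). nra.
Qed.

Definition freq_bound := rsum (fun j => Cnorm1 (mu (lam j))) (2 * p).
Definition amp_bound := rsum (fun j => Cnorm1 (r j)) (2 * p).
Definition growth_bound := rsum (fun j => Rabs (snd (lam j))) (2 * p).

Lemma freq_bound_ge0 : 0 <= freq_bound.
Proof. apply rsum_nonneg; intros; apply Cnorm1_ge0. Qed.

Lemma Cnorm1_dR k x T : Rabs x <= T ->
  Cnorm1 (dR k x) <= amp_bound * (2 * exp (growth_bound * T)) * freq_bound ^ k.
Proof.
  intros HT. eapply Rle_trans; [apply Cnorm1_Csum|].
  apply Rle_trans
    with (rsum (fun j => (2 * exp (growth_bound * T) * freq_bound ^ k) * Cnorm1 (r j)) (2 * p)).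
  - apply rsum_le. intros j Hj.
    eapply Rle_trans; [apply Cnorm1_Cmul|]. rewrite (Rmult_comm _ (Cnorm1 (r j))).
    apply Rmult_le_compat_l; [apply Cnorm1_ge0|].
    unfold dexp. eapply Rle_trans; [apply Cnorm1_Cmul|]. rewrite (Rmult_comm (Cnorm1 _)).
    apply Rmult_le_compat; try apply Cnorm1_ge0.
    + eapply Rle_trans; [apply Cnorm1_Cexpi|]. apply Rmult_le_compat_l; [lra|].
      apply exp_le_mono, Rmult_le_compat; try apply Rabs_pos; [|exact HT].
      apply (le_rsum (fun j => Rabs (snd (lam j)))); [intros; apply Rabs_pos | exact Hj].
    + eapply Rle_trans; [apply Cnorm1_Cpow|]. apply pow_incr. split; [apply Cnorm1_ge0|].
      apply (le_rsum (fun j => Cnorm1 (mu (lam j)))); [intros; apply Cnorm1_ge0 | exact Hj].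
  - rewrite rsum_scal. unfold amp_bound. right; ring.
Qed.

Lemma Cnorm1_moment k : Cnorm1 (moment k) <= 2 * amp_bound * freq_bound ^ k.
Proof.
  rewrite <- dR_at_0. eapply Rle_trans; [apply (Cnorm1_dR k 0 0); rewrite Rabs_R0; lra|].
  rewrite Rmult_0_r, exp_0. right; ring.
Qed.

Lemma Pser_dR (f : Cplx -> R) x : (forall u, Rabs (f u) <= Cnorm1 u) ->
  chain (fun k x => f (dR k x)) ->
  Pser (fun k => f (moment k) / INR (fact k)) x (f (dR 0 x)).
Proof.
  intros Hf Hc.
  pose proof (chain_taylor _ 0 x (amp_bound * (2 * exp (growth_bound * Rabs x))) freq_bound
                Hc freq_bound_ge0) as T.
  rewrite Rplus_0_l in T. eapply infinite_sum_ext; [|apply T].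
  - intros k. rewrite <- dR_at_0. reflexivity.
  - intros k t Ht. rewrite Rminus_0_r in Ht.
    eapply Rle_trans; [apply Hf | apply Cnorm1_dR, Ht].
Qed.

Lemma snd_dR x : snd (dR 0 x) = 0.
Proof.
  apply (Pser_zero_coef (fun k => snd (moment k) / INR (fact k)) x);
    [intros k; rewrite snd_moment; unfold Rdiv; ring|].
  apply Pser_dR; [apply Rabs_snd_le_Cnorm1 | apply (proj2 cchain_dR)].
Qed.

Lemma dR_even x : dR 0 (- x) = dR 0 x.
Proof.
  apply Cext; [|rewrite !snd_dR; reflexivity].
  apply (uniqueness_sum (fun k => fst (moment k) / INR (fact k) * x ^ k));
    [|apply Pser_dR; [apply Rabs_fst_le_Cnorm1 | apply (proj1 cchain_dR)]].
  eapply infinite_sum_ext; [|apply Pser_dR; [apply Rabs_fst_le_Cnorm1 | apply (proj1 cchain_dR)]].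
  intros k. destruct (Nat.Even_or_Odd k) as [[i ->]|[i ->]].
  - rewrite !pow_mult. replace ((- x) ^ 2) with (x ^ 2) by ring. reflexivity.
  - rewrite fst_moment_odd. unfold Rdiv; ring.
Qed.

(** Since the odd Taylor coefficients of [R] vanish, [R x = rho (x^2)]. *)
Definition rho_coef m := fst (moment (2 * m)) / INR (fact (2 * m)).
Definition rho := PSeries rho_coef.

Lemma rho_coef_bound m :
  Rabs (rho_coef m) <= 2 * amp_bound * (freq_bound ^ 2) ^ m / INR (fact m).
Proof.
  unfold rho_coef. rewrite Rabs_div by apply INR_fact_neq_0.
  rewrite (Rabs_right (INR (fact (2 * m)))) by (apply Rle_ge, pos_INR).
  rewrite <- pow_mult.
  pose proof (Rle_trans _ _ _ (Rabs_fst_le_Cnorm1 _) (Cnorm1_moment (2 * m))) as H.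
  pose proof (INR_fact_lt_0 m) as Hm. pose proof (INR_fact_lt_0 (2 * m)) as H2m.
  assert (Hf : INR (fact m) <= INR (fact (2 * m))) by (apply le_INR, fact_le; lia).
  assert (0 <= 2 * amp_bound * freq_bound ^ (2 * m))
    by (eapply Rle_trans; [apply Rabs_pos | exact H]).
  unfold Rdiv. eapply Rle_trans; [apply Rmult_le_compat_r; [left; apply Rinv_0_lt_compat, H2m | exact H]|].
  apply Rmult_le_compat_l; [assumption|]. apply Rinv_le_contravar; assumption.
Qed.

Lemma rho_analytic : real_analytic rho.
Proof.
  apply (PSeries_decay_analytic _ (2 * amp_bound) (freq_bound ^ 2)); [apply pow2_ge_0|].
  apply rho_coef_bound.
Qed.

Lemma sum_rho_coef x m : sum_f_R0 (fun i => rho_coef i * (x ^ 2) ^ i) m =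
  sum_f_R0 (fun k => fst (moment k) / INR (fact k) * x ^ k) (2 * m + 1).
Proof.
  induction m as [|m IH].
  - pose proof (fst_moment_odd 0) as H1. simpl in H1 |- *. rewrite H1. unfold rho_coef. simpl. field.
  - replace (2 * S m + 1)%nat with (S (S (2 * m + 1))) by lia.
    rewrite !tech5, <- IH, Rplus_assoc. f_equal.
    replace (S (S (2 * m + 1))) with (2 * S m + 1)%nat by lia.
    replace (S (2 * m + 1)) with (2 * S m)%nat by lia.
    rewrite fst_moment_odd, pow_mult. unfold rho_coef, Rdiv. ring.
Qed.

Lemma fst_dR_rho x : fst (dR 0 x) = rho (x ^ 2).
Proof.
  symmetry. apply is_pseries_unique, is_pseries_Reals.
  pose proof (Pser_dR fst x Rabs_fst_le_Cnorm1 (proj1 cchain_dR)) as H.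
  intros eps He. destruct (H eps He) as [N0 HN0]. exists N0. intros m Hm.
  rewrite sum_rho_coef. apply HN0. lia.
Qed.

Lemma dR_rho x : dR 0 x = RtoC (rho (x ^ 2)).
Proof. apply Cext; [apply fst_dR_rho | apply snd_dR]. Qed.

(** [Re P x = pi (x^2)] for a polynomial [pi] of degree [< n - p]; [dpi k] is
    the [k]-th derivative of [pi]. *)
Definition dpi k t := rsum (fun i => fst (coef (2 * i)) * dmono i k t) N.

Lemma chain_dpi : chain dpi.
Proof. apply chain_rsum. intros i; apply chain_dmono. Qed.

Lemma fst_dP_dpi x : fst (dP 0 x) = dpi 0 (x ^ 2).
Proof.
  unfold dP, dpi. rewrite fst_Csum.
  rewrite (rsum_ext _ (fun m => fst (coef m) * x ^ m)).
  2:{ intros j Hj. unfold coef. rewrite (proj2 (Nat.ltb_lt j N) Hj), fst_Cmul_RtoC_r. reflexivity. }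
  rewrite <- (rsum_extend (fun m => fst (coef m) * x ^ m) N N)
    by (intros m Hm; rewrite coef_high by exact Hm; apply Rmult_0_l).
  replace (N + N)%nat with (2 * N)%nat by lia. rewrite rsum_even_odd.
  apply rsum_ext. intros i _. rewrite fst_coef_odd, dmono_0_r, pow_mult. ring.
Qed.

Lemma dpi_high k : (n - p <= k)%nat -> dpi k 1 = 0.
Proof.
  intros Hk. unfold dpi. rewrite (rsum_ext _ (fun _ => 0 * 0)), rsum_scal; [ring|].
  intros i _. destruct (Nat.lt_ge_cases i k).
  - rewrite dmono_high by assumption. ring.
  - rewrite fst_coef_high by lia. ring.
Qed.

Lemma chain_rho : chain (fun k => Derive_n rho k).
Proof. apply (chain_Derive_n_PSeries_decay _ _ _ (pow2_ge_0 _) rho_coef_bound). Qed.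

Lemma fst_dZ_0 x : fst (dZ 0 x) = rho (x ^ 2) + dpi 0 (x ^ 2).
Proof. unfold dZ, Cadd. cbn [fst]. rewrite fst_dR_rho, fst_dP_dpi. reflexivity. Qed.

(** [Re z] is flat to order [n] at [1], hence so is [rho + pi = (Re Z) o sqrt]. *)
Lemma rho_dpi_flat k : (k < n)%nat -> Derive_n rho k 1 + dpi k 1 = 0.
Proof.
  apply (flat_at_chain_on 0 2 (fun k t => Derive_n rho k t + dpi k t)
           (fun t => fst (dZ 0 (dsqrt 0 t))) 1 n); [|lra| |].
  - intros j t _. apply derivable_pt_lim_plus; [apply chain_rho | apply chain_dpi].
  - intros t Ht. rewrite fst_dZ_0. unfold dsqrt; simpl.
    rewrite !Rmult_1_l, !Rmult_1_r, <- Rsqr_def, Rsqr_sqrt by lra. reflexivity.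
  - apply (flat_at_comp 0 2 (fun k x => fst (dZ k x))); [apply (proj1 cchain_dZ)| |].
    + intros j Hj. replace (dsqrt 0 1) with 1 by (unfold dsqrt; simpl; rewrite sqrt_1; ring).
      rewrite <- D_dZ by (unfold Icl; lia || lra). apply Hbc, Hj.
    + apply smooth_on_chain_on, chain_on_dsqrt.
Qed.

Lemma rho_derivs_vanish k : (n - p <= k)%nat -> (k < n)%nat -> Derive_n rho k 1 = 0.
Proof.
  intros Hk1 Hk2. pose proof (rho_dpi_flat k Hk2) as H.
  rewrite dpi_high in H by exact Hk1. lra.
Qed.

End EvenEigenfunction.

Theorem mainTheorem9 (p n : nat) (Lam : R) (z : R -> R)
  (lam : nat -> Cplx) (r : nat -> Cplx) (N : nat) (c : nat -> Cplx) :
  (1 <= p)%nat -> (p < n)%nat -> 0 < Lam ->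
  eigenfunction p n Lam z ->
  (forall x, Icl x -> z (- x) = z x) ->
  (forall j, (j < 2 * p)%nat -> Cpow (lam j) (2 * p) = RtoC Lam) ->
  (forall i j, (i < 2 * p)%nat -> (j < 2 * p)%nat -> i <> j -> lam i <> lam j) ->
  (forall x, Icl x ->
     RtoC (z x) =
     Cadd (Csum (fun j => Cmul (r j) (Cexpi (lam j) x)) (2 * p))
          (Csum (fun k => Cmul (c k) (RtoC (x ^ k))) N)) ->
  let Rf := fun x => Csum (fun j => Cmul (r j) (Cexpi (lam j) x)) (2 * p) in
  (forall x, Rf (- x) = Rf x) /\
  exists rho : R -> R,
    real_analytic rho /\
    (forall x, Rf x = RtoC (rho (x ^ 2))) /\
    exists Drho : nat -> R -> R,
      all_derivs rho Drho /\
      (forall k, (n - p <= k)%nat -> (k <= n - 1)%nat -> Drho k 1 = 0).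
Proof.
  (* The roots [lam j] need not be distinct for this argument. *)
  intros Hp Hn HLam [D [HD [Hode [Hbc _]]]] Heven Hroots _ Hz Rf.
  assert (Hbc1 : forall j, (j < n)%nat -> D j 1 = 0) by (intros j Hj; apply Hbc, Hj).
  assert (HRf : forall x, Rf x = dR p lam r 0 x) by (intros x; symmetry; apply dR_0).
  split; [intros x; rewrite !HRf; eapply dR_even; eassumption|].
  exists (rho p lam r). split; [eapply rho_analytic; eassumption|]. split.
  - intros x. rewrite HRf. eapply dR_rho; eassumption.
  - exists (fun k => Derive_n (rho p lam r) k).
    split; [split; [reflexivity | eapply chain_rho; eassumption]|].
    intros k Hk1 Hk2. eapply rho_derivs_vanish; eassumption || lia.
Qed.
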